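(* Let $M$ be a set of $5$ indivisible items. There exist strict monotone preferences $\preceq_1,\preceq_2$ over $2^M$ for two agents such that for every budget profile $(b_1,b_2)$ with $b_1,b_2>0$ and $\tfrac{4}{3}b_2>b_1>b_2$, the Fisher market with these preferences and budgets has no competitive equilibrium.
   Context: A monotone preference $\preceq_i$ is a complete and transitive weak order over all subsets of $M$ such that $S\preceq_i T$ whenever $S\subseteq T$; it is strict if for any $S\ne T$ either $S\prec_i T$ or $T\prec_i S$ (where $S\prec_i T$ means $S\preceq_i T$ and not $T\preceq_i S$). Given item prices $p=(p_j)_{j\in M}$ with $p(S)=\sum_{j\in S}p_j$, a bundle $S$ is demanded by agent $i$ with budget $b_i$ if $p(S)\le b_i$ and $p(T)>b_i$ for every $T$ with $S\prec_i T$. A competitive equilibrium is a pair $(\mathcal S,p)$ where $\mathcal S=(S_1,S_2)$ is a partition of all items of $M$ between the two agents and $p$ is a price vector, such that $S_i$ is demanded by agent $i$ at prices $p$ for each $i$. *)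

From mathcomp Require Import all_boot all_order all_algebra.
From mathcomp Require Import reals.
Set Implicit Arguments. Unset Strict Implicit. Unset Printing Implicit Defensive.
Import Order.TTheory GRing.Theory Num.Theory.
Local Open Scope ring_scope.

(* Items: M = 'I_m; bundles are subsets {set 'I_m}.
   A preference is a boolean relation pr with  pr S T  meaning  S ⪯ T. *)
Definition pref (m : nat) := {set 'I_m} -> {set 'I_m} -> bool.

Definition pref_lt m (pr : pref m) (S T : {set 'I_m}) : bool :=
  pr S T && ~~ pr T S.

Definition monotone_pref m (pr : pref m) : Prop :=
  [/\ (forall S T, pr S T || pr T S),
      (forall S T U, pr S T -> pr T U -> pr S U)
    & (forall S T : {set 'I_m}, S \subset T -> pr S T)].

Definition strict_pref m (pr : pref m) : Prop :=
  forall S T, S != T -> pref_lt pr S T || pref_lt pr T S.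

Definition cost (R : realType) m (p : 'I_m -> R) (S : {set 'I_m}) : R :=
  \sum_(j in S) p j.

Definition demanded (R : realType) m (pr : pref m) (b : R) (p : 'I_m -> R)
    (S : {set 'I_m}) : Prop :=
  cost p S <= b /\ (forall T, pref_lt pr S T -> b < cost p T).

Definition competitive_equilibrium (R : realType) m (pr1 pr2 : pref m)
    (b1 b2 : R) (S1 S2 : {set 'I_m}) (p : 'I_m -> R) : Prop :=
  [/\ S1 :&: S2 = set0, S1 :|: S2 = setT,
      demanded pr1 b1 p S1 & demanded pr2 b2 p S2].

From mathcomp Require Import all_boot all_order all_algebra.
From mathcomp Require Import reals.
From mathcomp Require Import lra.
Set Implicit Arguments.
Unset Strict Implicit.
Unset Printing Implicit Defensive.
Import Order.TTheory GRing.Theory Num.Theory.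

(* Both agents rank the 32 bundles strictly: [order1] and [order2] list them
   from least to most preferred.  In an equilibrium (S, M \ S) at prices p,
   every bundle that an agent strictly prefers to its share must cost more
   than its budget.  For each of the 32 splits, a few such bundles together
   with p(S) <= b1, p(M \ S) <= b2 and b2 < b1 < 4/3 b2 form an infeasible
   system of linear inequalities.  Typically agent 1 prefers the share of
   agent 2, who affords it with a smaller budget; the remaining splits need
   up to four bundles. *)

Definition bit (c k : nat) : bool := odd (iter k half c).

Lemma bit_sum_pow2 n (f : 'I_n -> bool) (k : 'I_n) :
  bit (\sum_(j < n) f j * 2 ^ j) k = f k.
Proof.
elim: n f k => [|n IHn] f k; first by case: k.
have -> : \sum_(j < n.+1) f j * 2 ^ j
          = f ord0 + (\sum_(j < n) f (lift ord0 j) * 2 ^ j).*2.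
  rewrite big_ord_recl muln1 -mul2n big_distrr /=; congr (_ + _).
  by apply: eq_bigr => j _; rewrite expnS mulnCA.
case: (unliftP ord0 k) => [k' ->|->].
  by rewrite /bit lift0 iterSr half_bit_double; exact: (IHn (f \o lift ord0)).
by rewrite /bit /= oddD odd_double addbF oddb.
Qed.

Lemma sum_bits_pow2 n c : (c < 2 ^ n)%N -> \sum_(j < n) bit c j * 2 ^ j = c.
Proof.
elim: n c => [|n IHn] c; first by rewrite expn0 ltnS leqn0 big_ord0 => /eqP.
move=> c_lt; rewrite big_ord_recl muln1.
have half_lt : (c./2 < 2 ^ n)%N by rewrite ltn_half_double -mul2n -expnS.
rewrite -[in RHS](odd_double_half c) -[in RHS](IHn _ half_lt) -mul2n big_distrr.
congr (_ + _); apply: eq_bigr => j _.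
by rewrite lift0 /= expnS mulnCA /bit iterSr.
Qed.

Lemma sum_pow2 n : (\sum_(j < n) 2 ^ j).+1 = 2 ^ n.
Proof.
elim: n => [|n IHn]; first by rewrite big_ord0.
by rewrite big_ord_recr /= -addSn IHn expnS mul2n addnn.
Qed.

Section BitmaskEncoding.
Variable m : nat.

Definition code (S : {set 'I_m}) : nat := \sum_(j < m) (j \in S) * 2 ^ j.

Definition bundle (c : nat) : {set 'I_m} := [set j : 'I_m | bit c j].

Lemma bit_code S (j : 'I_m) : bit (code S) j = (j \in S).
Proof. exact: (@bit_sum_pow2 m (mem S)). Qed.

Lemma bundle_code : cancel code bundle.
Proof. by move=> S; apply/setP => j; rewrite inE bit_code. Qed.

Lemma code_bundle c : (c < 2 ^ m)%N -> code (bundle c) = c.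
Proof. by rewrite /code; under eq_bigr do rewrite inE; exact: sum_bits_pow2. Qed.

Lemma code_add_setC S : code S + code (~: S) = (2 ^ m).-1.
Proof.
rewrite -sum_pow2 -big_split; apply: eq_bigr => j _.
by rewrite inE; case: (j \in S) => /=; rewrite ?mul1n ?mul0n ?addn0.
Qed.

Lemma code_setC S : code (~: S) = (2 ^ m).-1 - code S.
Proof. by rewrite -(code_add_setC S) addKn. Qed.

Lemma code_lt S : (code S < 2 ^ m)%N.
Proof.
apply: leq_ltn_trans (leq_addr (code (~: S)) _) _.
by rewrite code_add_setC ltn_predL expn_gt0.
Qed.

End BitmaskEncoding.

Section RankPreference.
Variables (m : nat) (rank : {set 'I_m} -> nat).

Definition rank_pref : pref m := fun S T => (rank S <= rank T)%N.

Lemma pref_lt_rank S T : pref_lt rank_pref S T = (rank S < rank T)%N.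
Proof. by rewrite /pref_lt /rank_pref -ltnNge andb_idl // => /ltnW. Qed.

Lemma rank_pref_monotone :
  {homo rank : S T / S \subset T >-> (S <= T)%N} -> monotone_pref rank_pref.
Proof. by split=> [S T|S T U|//]; [exact: leq_total | exact: leq_trans]. Qed.

Lemma rank_pref_strict : injective rank -> strict_pref rank_pref.
Proof.
move=> rank_inj S T neqST; rewrite !pref_lt_rank.
by case: ltngtP => // /rank_inj eqST; rewrite eqST eqxx in neqST.
Qed.

End RankPreference.

Section OrderPreference.
Variable m : nat.

Definition order_pref (ord : seq nat) : pref m :=
  rank_pref (fun S => index (code S) ord).

Definition order_monotone (ord : seq nat) : bool :=
  all (fun c => all (fun d =>
    all (fun j => bit c j ==> bit d j) (iota 0 m) ==> (index c ord <= index d ord)%N)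
  (iota 0 (2 ^ m))) (iota 0 (2 ^ m)).

Lemma order_pref_monotone ord : order_monotone ord -> monotone_pref (order_pref ord).
Proof.
move=> /allP mono; apply: rank_pref_monotone => S T /subsetP sub_ST.
have in_iota (U : {set 'I_m}) : code U \in iota 0 (2 ^ m).
  by rewrite mem_iota add0n code_lt.
move: (mono _ (in_iota S)) => /allP/(_ _ (in_iota T))/implyP; apply.
apply/allP => j; rewrite mem_iota => /= j_lt; rewrite -[j]/(nat_of_ord (Ordinal j_lt)) !bit_code.
by apply/implyP; apply: sub_ST.
Qed.

Lemma order_pref_strict (ord : seq nat) :
  all (mem ord) (iota 0 (2 ^ m)) -> strict_pref (order_pref ord).
Proof.
move=> /allP ord_full; apply: rank_pref_strict => S T eq_index.
have in_ord (U : {set 'I_m}) : code U \in ord.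
  by apply: ord_full; rewrite mem_iota add0n code_lt.
exact: (can_inj (@bundle_code m) (index_inj 0 (in_ord S) (in_ord T) eq_index)).
Qed.

End OrderPreference.

Local Open Scope ring_scope.

Lemma equilibrium_setC (R : realType) m (pr1 pr2 : pref m) (b1 b2 : R) S1 S2 p :
  competitive_equilibrium pr1 pr2 b1 b2 S1 S2 p -> S2 = ~: S1.
Proof.
case=> /setP disj /setP cover _ _; apply/setP=> j.
move: (disj j) (cover j); rewrite !inE.
by case: (j \in S1); case: (j \in S2).
Qed.

Lemma demanded_order_pref (R : realType) m ord (b : R) p S :
  demanded (order_pref ord) b p S ->
  forall e, (e < 2 ^ m)%N -> (index (code S) ord < index e ord)%N ->
  b < cost p (bundle m e).
Proof.
by case=> _ better e e_lt lt_Se; apply: better; rewrite pref_lt_rank code_bundle.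
Qed.

Lemma cost_bundle (R : realType) m (p : 'I_m -> R) c :
  cost p (bundle m c) = \sum_(j < m) (if bit c j then p j else 0).
Proof. by rewrite /cost big_mkcond; apply: eq_bigr => j _; rewrite inE. Qed.

Definition order1 : seq nat :=
  [:: 0; 2; 4; 8; 1; 16; 10; 12; 17; 18; 24; 26; 3; 5; 19; 9;
      13; 20; 28; 11; 21; 6; 25; 27; 29; 22; 7; 23; 14; 30; 15; 31].

Definition order2 : seq nat :=
  [:: 0; 1; 4; 2; 8; 5; 6; 12; 16; 9; 17; 10; 24; 20; 28; 25;
      21; 18; 14; 3; 22; 26; 13; 30; 11; 19; 29; 27; 7; 23; 15; 31].

(* Row [c] (four rows per line) lists bundles that agent 1, resp. agent 2,
   strictly prefers to its share in the split ([bundle c], [bundle (31 - c)]);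
   their being unaffordable refutes that split. *)
Definition certificate (c : nat) : seq nat * seq nat :=
  nth ([::], [::])
  [:: ([:: 31], [::]); ([:: 30], [::]); ([:: 29], [::]); ([:: 28], [::]);
      ([:: 27], [::]); ([:: 20], [:: 11]); ([:: 25], [::]); ([:: 14], [:: 3; 13; 20]);
      ([:: 23], [::]); ([:: 22], [::]); ([:: 21], [::]); ([:: 6], [:: 25]);
      ([:: 19], [::]); ([:: 20], [:: 11]); ([::], [:: 3; 13; 20; 24]); ([::], [:: 7; 11; 13; 14]);
      ([:: 15], [::]); ([:: 14], [::]); ([:: 13], [::]); ([:: 15], [:: 16]);
      ([:: 11], [::]); ([:: 7], [:: 24]); ([:: 14], [:: 17]); ([:: 15], [:: 16]);
      ([:: 11; 20], [::]); ([:: 15], [:: 16]); ([:: 15], [:: 16]); ([:: 15], [:: 16]);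
      ([:: 6; 25], [::]); ([:: 15], [:: 16]); ([:: 15], [:: 16]); ([::], [:: 15; 23; 27; 28])] c.

Ltac have_unaffordable D ws :=
  lazymatch ws with
  | nil => idtac
  | cons ?e ?ws' => have := D e isT isT; have_unaffordable D ws'
  end.

Ltac refute_split :=
  lazymatch goal with
  | |- is_true (cost _ (bundle 5 ?c) <= _) -> _ =>
    let w := eval compute in (certificate c) in
    lazymatch w with
    | (?ws1, ?ws2) =>
      let C1 := fresh in let C2 := fresh in let D1 := fresh in let D2 := fresh in
      let d := eval compute in (31 - c)%N in
      intros C1 C2 D1 D2;
      (* [simpl] does not evaluate [subn] *)
      change (31 - c)%N with d in C2;
      have_unaffordable D1 ws1; have_unaffordable D2 ws2;
      revert C1 C2; rewrite !cost_bundle !big_ord_recl !big_ord0 /=; lra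
    end
  end.

Lemma infeasible_split (R : realType) (p : 'I_5 -> R) (b1 b2 : R) :
  0 < b2 -> b2 < b1 -> b1 < 4 / 3 * b2 ->
  forall c, (c < 32)%N ->
  cost p (bundle 5 c) <= b1 -> cost p (bundle 5 (31 - c)) <= b2 ->
  (forall e, (e < 32)%N -> (index c order1 < index e order1)%N ->
     b1 < cost p (bundle 5 e)) ->
  (forall e, (e < 32)%N -> (index (31 - c) order2 < index e order2)%N ->
     b2 < cost p (bundle 5 e)) ->
  False.
Proof.
move=> b2_gt0 b2_lt_b1 b1_lt c.
by do 32 (case: c => [_|c]; first by refute_split).
Qed.

Theorem mainTheorem3 (R : realType) :
  exists pr1 pr2 : pref 5,
    [/\ monotone_pref pr1, strict_pref pr1, monotone_pref pr2, strict_pref pr2 &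
      forall b1 b2 : R, 0 < b1 -> 0 < b2 -> b2 < b1 -> b1 < 4 / 3 * b2 ->
        ~ (exists (S1 S2 : {set 'I_5}) (p : 'I_5 -> R),
              competitive_equilibrium pr1 pr2 b1 b2 S1 S2 p)].
Proof.
exists (order_pref order1), (order_pref order2); split.
- exact: order_pref_monotone.
- exact: order_pref_strict.
- exact: order_pref_monotone.
- exact: order_pref_strict.
move=> b1 b2 _ b2_gt0 b2_lt_b1 b1_lt [S1 [S2 [p eqm]]].
have S2_code : code S2 = (31 - code S1)%N by rewrite (equilibrium_setC eqm) code_setC.
case: eqm => _ _ dem1 dem2.
apply: (infeasible_split b2_gt0 b2_lt_b1 b1_lt (code_lt S1)).
- by rewrite bundle_code; exact: proj1 dem1.
- by rewrite -S2_code bundle_code; exact: proj1 dem2.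
- exact: demanded_order_pref dem1.
- by rewrite -S2_code; exact: demanded_order_pref dem2.
Qed.
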